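(* For any finite alphabet $\mathcal{X}$ with $|\mathcal{X}|\ge2$ and any pmf $P$ on $\mathcal{X}$, the minimum average age $\bar A^*=\inf_e \bar A(e)$ over all prefix-free codes $e:\mathcal{X}\to\{0,1\}^*$ satisfies $$\frac32 H(P)-\frac12\le \bar A^*\le \frac32\log_2|\mathcal{X}|+1,$$ where $H(P)=-\sum_x P(x)\log_2 P(x)$.
   Context: For a prefix-free code $e$ with codeword lengths $\ell(x)$ and $L=\ell(X)$, $X\sim P$, the average age of the (deterministic) memoryless update scheme is $\bar A(e)=\mathbb{E}[L]+\frac{\mathbb{E}[L^2]}{2\mathbb{E}[L]}-\frac12$. *)

From mathcomp Require Import all_boot.
From Stdlib Require Import Reals.
Set Implicit Arguments. Unset Strict Implicit. Unset Printing Implicit Defensive.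

Local Open Scope R_scope.

Definition Rsum (X : finType) (F : X -> R) : R := \big[Rplus/0]_(x : X) F x.

Definition is_pmf (X : finType) (P : X -> R) : Prop :=
  (forall x, 0 <= P x) /\ Rsum P = 1.

Definition prefix_free (X : finType) (e : X -> seq bool) : Prop :=
  forall x y : X, x <> y -> ~~ prefix (e x) (e y).

Definition log2 (x : R) : R := ln x / ln 2.

(* Shannon entropy in bits (ln 0 = 0 in Stdlib, so 0 log 0 = 0) *)
Definition entropy (X : finType) (P : X -> R) : R :=
  - Rsum (fun x => P x * log2 (P x)).

Definition EL (X : finType) (P : X -> R) (e : X -> seq bool) : R :=
  Rsum (fun x => P x * INR (size (e x))).
Definition EL2 (X : finType) (P : X -> R) (e : X -> seq bool) : R :=
  Rsum (fun x => P x * (INR (size (e x)))^2).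

(* average age of the memoryless update scheme *)
Definition avg_age (X : finType) (P : X -> R) (e : X -> seq bool) : R :=
  EL P e + EL2 P e / (2 * EL P e) - 1/2.

Definition is_inf (S : R -> Prop) (m : R) : Prop :=
  (forall a, S a -> m <= a) /\ (forall b, (forall a, S a -> b <= a) -> b <= m).

Definition ages (X : finType) (P : X -> R) : R -> Prop :=
  fun a => exists e : X -> seq bool, prefix_free e /\ a = avg_age P e.

From HB Require Import structures.
From Stdlib Require Import Reals Lra.
From mathcomp Require Import all_boot.
Set Implicit Arguments. Unset Strict Implicit.

(* Since E[L^2] >= E[L]^2 (the variance of L is nonnegative),
   A(e) >= 3/2 E[L] - 1/2 as soon as E[L] > 0, which holds because on an
   alphabet with at least two letters every codeword is nonempty.  By the Kraft
   inequality sum_x 2^-l(x) <= 1 and Gibbs' inequality ln y <= y - 1, the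
   source coding bound E[L] >= H(P) holds, whence A(e) >= 3/2 H(P) - 1/2.

   Upper bound.  The fixed-length code with k = floor(log2 |X|) + 1 bits is
   prefix-free and has age 3/2 k - 1/2 <= 3/2 log2 |X| + 1.

   The set of achievable ages is thus nonempty and bounded below, so by
   completeness of R it has an infimum, which inherits both bounds. *)

Local Open Scope R_scope.

Lemma Rplus_associative : associative Rplus.
Proof. by move=> x y z; rewrite Rplus_assoc. Qed.
HB.instance Definition _ :=
  Monoid.isComLaw.Build R 0 Rplus Rplus_associative Rplus_comm Rplus_0_l.

Section FiniteSums.
Variable X : finType.

Lemma bigR_scale (A : pred X) (c : R) (F : X -> R) :
  c * \big[Rplus/0]_(x | A x) F x = \big[Rplus/0]_(x | A x) (c * F x).
Proof.
apply: (big_endo (fun y => c * y)); last by rewrite Rmult_0_r.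
by move=> a b; rewrite Rmult_plus_distr_l.
Qed.

Lemma bigR_le (A : pred X) (F G : X -> R) :
  (forall x, A x -> F x <= G x) ->
  \big[Rplus/0]_(x | A x) F x <= \big[Rplus/0]_(x | A x) G x.
Proof.
move=> FG; apply: (big_ind2 (fun a b => a <= b)) => //; first lra.
by move=> *; apply: Rplus_le_compat.
Qed.

Lemma Rsum_lin (a b : R) (F G : X -> R) :
  Rsum (fun x => a * F x + b * G x) = a * Rsum F + b * Rsum G.
Proof. by rewrite /Rsum big_split /= !bigR_scale. Qed.

Lemma Rsum_le (F G : X -> R) : (forall x, F x <= G x) -> Rsum F <= Rsum G.
Proof. by move=> FG; apply: bigR_le. Qed.

Lemma Rsum_pmf_const (P : X -> R) (c : R) :
  is_pmf P -> Rsum (fun x => P x * c) = c.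
Proof.
move=> [_ P1].
have -> : Rsum (fun x => P x * c) = c * Rsum P + 0 * Rsum P.
  by rewrite -Rsum_lin; apply: eq_bigr => x _; ring.
by rewrite P1; ring.
Qed.

End FiniteSums.

(* Kraft's inequality, proved for a code that is prefix-free on a subset A of
   the alphabet, by induction on a bound for the codeword lengths: splitting by
   the first bit and deleting it gives two prefix-free codes on smaller lengths,
   each contributing at most 1/2. *)
Section Kraft.
Variable X : finType.

Definition prefix_free_on (A : pred X) (e : X -> seq bool) : Prop :=
  forall x y, A x -> A y -> x <> y -> ~~ prefix (e x) (e y).

Definition kraft_sum (A : pred X) (e : X -> seq bool) : R :=
  \big[Rplus/0]_(x | A x) (/2) ^ size (e x).

(* The empty codeword is a prefix of everything, so it can only occur alone. *)
Lemma kraft_empty_codeword (A : pred X) (e : X -> seq bool) (x0 : X) :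
  prefix_free_on A e -> A x0 -> e x0 = [::] -> kraft_sum A e = 1.
Proof.
move=> pf Ax0 ex0; rewrite /kraft_sum (bigD1 x0) //= ex0 big1 /=; first lra.
move=> y /andP[Ay nyx]; have nxy : x0 <> y by move=> h; rewrite h eqxx in nyx.
by move: (pf x0 y Ax0 Ay nxy); rewrite ex0 prefix0s.
Qed.

Lemma prefix_behead (s t : seq bool) : s <> [::] -> t <> [::] ->
  head false s = head false t -> prefix s t = prefix (behead s) (behead t).
Proof. by case: s => // a s; case: t => // b t _ _ /= ->; rewrite eqxx. Qed.

Lemma prefix_free_on_behead (A : pred X) (e : X -> seq bool) (b : bool) :
  prefix_free_on A e -> (forall x, A x -> e x <> [::]) ->
  prefix_free_on [pred x | A x && (head false (e x) == b)] (behead \o e).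
Proof.
move=> pf ne x y /andP[Ax /eqP hx] /andP[Ay /eqP hy] nxy /=.
by rewrite -prefix_behead; [exact: pf | exact: ne | exact: ne | rewrite hx hy].
Qed.

(* If some codeword is
   empty the sum is exactly 1; otherwise lengths are at least 1, and the
   codewords starting with bit b form, once that bit is deleted, a prefix-free
   code of lengths at most n - 1, so they contribute at most 1/2 each. *)
Lemma kraft_bounded (n : nat) : forall (A : pred X) (e : X -> seq bool),
  (forall x, A x -> (size (e x) <= n)%N) -> prefix_free_on A e ->
  kraft_sum A e <= 1.
Proof.
elim: n => [|n IH] A e le_n pf;
  case: (pickP [pred x | A x && (e x == [::])]) => [x0 /andP[Ax0 /eqP ex0]|no_empty];
  try by rewrite (kraft_empty_codeword pf Ax0 ex0); lra.
  rewrite /kraft_sum big1; first lra.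
  by move=> x Ax; move: (no_empty x) (le_n x Ax); rewrite /= Ax; case: (e x).
have ne x : A x -> e x <> [::] by move=> Ax ex; move: (no_empty x); rewrite /= Ax ex.
have half (b : bool) :
    \big[Rplus/0]_(x | A x && (head false (e x) == b)) (/2) ^ size (e x) <= /2.
  have IHb := IH _ _ _ (prefix_free_on_behead (b := b) pf ne).
  rewrite /kraft_sum /= in IHb.
  have drop_bit x : A x && (head false (e x) == b) ->
      (/2) ^ size (e x) = /2 * (/2) ^ size (behead (e x)).
    by case/andP=> Ax _; move: (ne x Ax); case: (e x).
  rewrite (eq_bigr _ drop_bit) -bigR_scale.
  suff : \big[Rplus/0]_(x | A x && (head false (e x) == b)) (/2) ^ size (behead (e x)) <= 1
    by lra.
  apply: IHb => x /andP[Ax _]; rewrite size_behead -subn1 leq_subLR add1n.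
  exact: le_n.
rewrite /kraft_sum (bigID (fun x => head false (e x) == true)) /=.
rewrite [Z in _ + Z](eq_bigl (fun x => A x && (head false (e x) == false))); last first.
  by move=> x; case: (head false (e x)).
have := half true; have := half false; lra.
Qed.

Lemma kraft (e : X -> seq bool) : prefix_free e ->
  Rsum (fun x => (/2) ^ size (e x)) <= 1.
Proof.
move=> pf; apply: (@kraft_bounded (\max_x size (e x)) xpredT).
  by move=> x _; exact: leq_bigmax.
by move=> x y _ _; exact: pf.
Qed.

End Kraft.

Lemma ln_le_sub1 (y : R) : 0 < y -> ln y <= y - 1.
Proof. by move=> y_pos; have := exp_ineq1_le (ln y); rewrite exp_ln //; lra. Qed.

Lemma ln2_pos : 0 < ln 2.
Proof. by have := ln_lt_2; lra. Qed.

(* One term of the source coding bound: -p log2 p <= p l + (2^-l - p) / ln 2,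
   i.e. ln y <= y - 1 applied to y = 2^-l / p. *)
Lemma gibbs_term (p : R) (l : nat) :
  0 <= p -> - (p * log2 p) <= p * INR l + ((/2) ^ l - p) / ln 2.
Proof.
move=> p_ge0; have l2 := ln2_pos; have q_pos : 0 < (/2) ^ l by apply: pow_lt; lra.
have ln_q : ln ((/2) ^ l) = - (INR l * ln 2).
  by rewrite ln_pow ?ln_Rinv; lra.
case: (Req_dec p 0) => [->|p_neq0].
  rewrite /Rdiv !Rmult_0_l Rminus_0_r; have := Rinv_0_lt_compat _ l2; nra.
have p_pos : 0 < p by lra.
have gibbs := ln_le_sub1 (Rdiv_lt_0_compat _ _ q_pos p_pos).
have ln_ratio : ln ((/2) ^ l / p) = - (INR l * ln 2) - ln p.
  by rewrite ln_mult ?ln_Rinv ?ln_q //; apply: Rinv_0_lt_compat.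
rewrite ln_ratio in gibbs.
have := Rmult_le_compat_l p _ _ p_ge0 gibbs.
have -> : p * ((/2) ^ l / p - 1) = (/2) ^ l - p by field; lra.
move=> scaled; apply: (Rmult_le_reg_r (ln 2)) => //.
rewrite /log2; field_simplify; [nra | lra | lra].
Qed.

Section AverageAge.
Variables (X : finType) (P : X -> R).
Hypothesis pmf : is_pmf P.

Lemma entropy_le_EL (e : X -> seq bool) : prefix_free e -> entropy P <= EL P e.
Proof.
move=> pf; have [P_ge0 P1] := pmf; have il := Rinv_0_lt_compat _ ln2_pos.
have term x : -1 * (P x * log2 (P x)) + -1 * (P x * INR (size (e x)))
              <= / ln 2 * (/2) ^ size (e x) + (- / ln 2) * P x.
  (* gibbs_term, written as a linear combination so that Rsum_lin applies *)
  by have := gibbs_term (size (e x)) (P_ge0 x); rewrite /Rdiv; lra.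
have := Rsum_le term; rewrite !Rsum_lin P1 /entropy /EL.
have := Rmult_le_compat_l _ _ _ (Rlt_le _ _ il) (kraft pf); lra.
Qed.

Lemma expectation_sq_le (f : X -> R) :
  Rsum (fun x => P x * f x) ^ 2 <= Rsum (fun x => P x * f x ^ 2).
Proof.
have [P_ge0 P1] := pmf; set m := Rsum (fun x => P x * f x).
have var_ge0 : 0 <= Rsum (fun x => P x * (f x - m) ^ 2).
  rewrite -(Rsum_pmf_const 0 pmf); apply: Rsum_le => x.
  by rewrite Rmult_0_r; apply: Rmult_le_pos; [exact: P_ge0 | apply: pow2_ge_0].
have var_eq : Rsum (fun x => P x * (f x - m) ^ 2)
    = 1 * Rsum (fun x => P x * f x ^ 2) + 1 * ((-2 * m) * m + m ^ 2 * Rsum P).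
  by rewrite -2!Rsum_lin; apply: eq_bigr => x _; ring.
by rewrite var_eq P1 in var_ge0; lra.
Qed.

(* Since E[L^2] >= E[L]^2, the age is at least 3/2 E[L] - 1/2. *)
Lemma avg_age_ge_EL (e : X -> seq bool) :
  0 < EL P e -> 3/2 * EL P e - 1/2 <= avg_age P e.
Proof.
move=> EL_pos; have sq := expectation_sq_le (fun x => INR (size (e x))).
rewrite -/(EL P e) -/(EL2 P e) in sq; rewrite /avg_age.
suff : EL P e / 2 <= EL2 P e / (2 * EL P e) by lra.
apply: (Rmult_le_reg_r (2 * EL P e)); first lra.
have -> : EL2 P e / (2 * EL P e) * (2 * EL P e) = EL2 P e by field; lra.
have -> : EL P e / 2 * (2 * EL P e) = EL P e ^ 2 by field.
exact: sq.
Qed.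

Lemma EL_ge1 (e : X -> seq bool) : (forall x, 0 < size (e x))%N -> 1 <= EL P e.
Proof.
move=> nonempty; have [P_ge0 _] := pmf.
rewrite -(Rsum_pmf_const 1 pmf); apply: Rsum_le => x.
apply: Rmult_le_compat_l => //; move: (nonempty x); case: (size (e x)) => // k _.
by rewrite S_INR; have := pos_INR k; lra.
Qed.

Lemma avg_age_fixed_length (e : X -> seq bool) (k : nat) :
  (0 < k)%N -> (forall x, size (e x) = k) -> avg_age P e = 3/2 * INR k - 1/2.
Proof.
move=> k_pos sz; have k_gt0 : 0 < INR k by apply: lt_0_INR; apply/ltP.
have EL_k : EL P e = INR k.
  by rewrite -(Rsum_pmf_const (INR k) pmf); apply: eq_bigr => x _; rewrite sz.
have EL2_k : EL2 P e = INR k ^ 2.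
  by rewrite -(Rsum_pmf_const (INR k ^ 2) pmf); apply: eq_bigr => x _; rewrite sz.
by rewrite /avg_age EL_k EL2_k; field; lra.
Qed.

End AverageAge.

Lemma prefix_free_nonempty (X : finType) (e : X -> seq bool) :
  (2 <= #|X|)%N -> prefix_free e -> forall x, (0 < size (e x))%N.
Proof.
move=> card2 pf x.
have [y y_neq_x] : exists y, y \in predC1 x.
  by apply/card_gt0P; rewrite cardC1 -ltnS (ltn_predK card2).
have := pf x y (fun h => negP y_neq_x (introT eqP (esym h))).
by case: (e x) => //; rewrite prefix0s.
Qed.

Lemma avg_age_lower_bound (X : finType) (P : X -> R) (e : X -> seq bool) :
  (2 <= #|X|)%N -> is_pmf P -> prefix_free e ->
  3/2 * entropy P - 1/2 <= avg_age P e.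
Proof.
move=> card2 pmf pf.
have EL1 := EL_ge1 pmf (prefix_free_nonempty card2 pf).
have := avg_age_ge_EL pmf (Rlt_le_trans _ _ _ Rlt_0_1 EL1).
have := entropy_le_EL pmf pf; lra.
Qed.

Lemma prefix_same_size (s t : seq bool) :
  size s = size t -> prefix s t -> s = t.
Proof. by move=> st; rewrite prefixE st take_size => /eqP. Qed.

(* An alphabet of at most 2^k letters has a prefix-free code of constant
   length k: number the letters and write each number with k bits. *)
Lemma fixed_length_code (X : finType) (k : nat) : (#|X| <= 2 ^ k)%N ->
  exists e : X -> seq bool, prefix_free e /\ forall x, size (e x) = k.
Proof.
move=> card_le; have small : (#|X| <= #|{: k.-tuple bool}|)%N.
  by rewrite card_tuple card_bool.
pose e x := val (enum_val (widen_ord small (enum_rank x)) : k.-tuple bool).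
have sz x : size (e x) = k by rewrite size_tuple.
exists e; split=> // x y x_neq_y; apply/negP.
move=> /(prefix_same_size (etrans (sz x) (esym (sz y)))).
move=> /val_inj /enum_val_inj /(congr1 val) /= rank_eq.
by apply/x_neq_y/enum_rank_inj/val_inj.
Qed.

Lemma INR_expn2 (k : nat) : INR (2 ^ k) = 2 ^ k.
Proof. by elim: k => //= k IH; rewrite expnS -multE mult_INR IH. Qed.

Lemma log2_ge_pow (k : nat) (y : R) : 2 ^ k <= y -> INR k <= log2 y.
Proof.
move=> pow_le; have l2 := ln2_pos; have pow_pos : 0 < 2 ^ k by apply: pow_lt; lra.
have ln_le : INR k * ln 2 <= ln y.
  rewrite -ln_pow; last lra.
  case: (Rle_lt_or_eq_dec _ _ pow_le) => [lt|<-]; last lra.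
  by apply: Rlt_le; apply: ln_increasing.
by rewrite /log2; apply: (Rmult_le_reg_r (ln 2)) => //; field_simplify; lra.
Qed.

(* The upper bound, achieved by the fixed-length code with
   floor(log2 |X|) + 1 bits per letter. *)
Lemma fixed_length_code_age (X : finType) (P : X -> R) :
  (2 <= #|X|)%N -> is_pmf P ->
  exists e, prefix_free e /\ avg_age P e <= 3/2 * log2 (INR #|X|) + 1.
Proof.
move=> card2 pmf; set k := trunc_log 2 #|X|.
have card_lt : (#|X| < 2 ^ k.+1)%N by apply: trunc_log_ltn.
have [e [pf sz]] := fixed_length_code (ltnW card_lt).
exists e; split=> //; rewrite (avg_age_fixed_length pmf _ sz) // S_INR.
suff : INR k <= log2 (INR #|X|) by lra.
apply: log2_ge_pow; rewrite -INR_expn2; apply: le_INR; apply/leP.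
by apply: trunc_logP => //; apply: leq_trans card2.
Qed.

(* A nonempty set of reals bounded below has an infimum (completeness of R
   applied to the set of opposites). *)
Lemma inf_exists (S : R -> Prop) (lb : R) :
  (exists a, S a) -> (forall a, S a -> lb <= a) -> exists m, is_inf S m.
Proof.
move=> [a0 Sa0] lb_le.
have bounded : bound (fun y => S (- y)).
  by exists (- lb) => y Sy; have := lb_le _ Sy; lra.
have inhabited : exists y, S (- y) by exists (- a0); rewrite Ropp_involutive.
have [m [m_ub m_lub]] := completeness _ bounded inhabited.
exists (- m); split=> [a Sa | b b_le].
- by have := m_ub (- a); rewrite Ropp_involutive => /(_ Sa); lra.
- suff : m <= - b by lra.
  by apply: m_lub => y Sy; have := b_le _ Sy; lra.
Qed.

Theorem mainTheorem3 (X : finType) (P : X -> R) :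
  (2 <= #|X|)%N -> is_pmf P ->
  exists Astar : R, is_inf (ages P) Astar /\
    (3/2 * entropy P - 1/2 <= Astar)%R /\
    (Astar <= 3/2 * log2 (INR #|X|) + 1)%R.
Proof.
move=> card2 pmf.
have [e0 [pf0 age0_le]] := fixed_length_code_age card2 pmf.
have ages_ge : forall a, ages P a -> 3/2 * entropy P - 1/2 <= a.
  by move=> a [e [pf ->]]; exact: avg_age_lower_bound.
have ages_e0 : ages P (avg_age P e0) by exists e0.
have [Astar [Astar_le Astar_glb]] := inf_exists (ex_intro _ _ ages_e0) ages_ge.
exists Astar; split; first by split.
split; first exact: Astar_glb.
exact: Rle_trans (Astar_le _ ages_e0) age0_le.
Qed.
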